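(* Let $K$ be an infinite field and let $f_1,\dots,f_r \in K[x_1,\dots,x_n]$ be homogeneous polynomials, where $f_1$ has degree $d\ge 1$ and its support contains $x_i^d$ for some $i$. Let $Z \subseteq \mathbb{A}^n$ be the closed subscheme defined by the ideal generated by $S_n.f_1 \cup \dots \cup S_n.f_r$. Then for general coefficients of $f_1$ with respect to its support, $Z$ is set-theoretically equal to $\{0\}$ (i.e., the radical of its defining ideal contains $(x_1,\dots,x_n)$), and the corresponding subscheme of $\mathbb{P}^{n-1}$ is empty.
   Context: $S_n$ acts on $K[x_1,\dots,x_n]$ by permuting the variables, $\sigma.x_i = x_{\sigma(i)}$, and $S_n.f$ denotes the orbit of $f$. The support of a polynomial is its set of monomials with nonzero coefficient. ''For general coefficients of $f_1$ with respect to its support $\mathcal{A}$'' means: the set of polynomials with support contained in $\mathcal{A}$ for which the assertion holds contains a non-empty Zariski-open subset of $K^{\mathcal{A}}$ (the space of such coefficient vectors). *)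

From mathcomp Require Import all_boot all_order all_algebra all_fingroup.
From mathcomp Require Import mpoly.
Set Implicit Arguments. Unset Strict Implicit. Unset Printing Implicit Defensive.
Import GRing.Theory.
Local Open Scope ring_scope.

Definition in_ideal (K : fieldType) (n : nat)
    (gen : {mpoly K[n]} -> Prop) (p : {mpoly K[n]}) : Prop :=
  exists s : seq ({mpoly K[n]} * {mpoly K[n]}),
    (forall q, q \in s -> gen q.2) /\ p = \sum_(q <- s) q.1 * q.2.

(* The generating set  S_n.g_1 ∪ ... ∪ S_n.g_r  where gs = [g_1; ...; g_r];
   the action is  sigma . x_i = x_(sigma i)  (msym). *)
Definition sym_orbits_gen (K : fieldType) (n : nat)
    (gs : seq {mpoly K[n]}) (p : {mpoly K[n]}) : Prop :=
  exists (s : 'S_n) (g : {mpoly K[n]}), g \in gs /\ p = msym s g.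

(* Affine zero set of the ideal is {0} set-theoretically:
   each x_i lies in the radical of the ideal. *)
Definition affine_zero_only (K : fieldType) (n : nat)
    (gen : {mpoly K[n]} -> Prop) : Prop :=
  forall i : 'I_n, exists k : nat, in_ideal gen ('X_i ^+ k).

(* The projective subscheme Proj(K[x]/I) of P^(n-1) is empty:
   the homogeneous ideal I contains all forms of some degree N,
   i.e. (K[x]/I)_N = 0 (equivalently, every monomial of degree N lies in I). *)
Definition proj_empty (K : fieldType) (n : nat)
    (gen : {mpoly K[n]} -> Prop) : Prop :=
  exists N : nat, forall m : 'X_{1..n}, mdeg m = N -> in_ideal gen 'X_[m].

Definition poly_of_coeffs (K : fieldType) (n : nat) (A : seq 'X_{1..n})
    (c : 'I_(size A) -> K) : {mpoly K[n]} :=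
  \sum_(j < size A) c j *: 'X_[nth 0%MM A j].

From mathcomp Require Import all_boot all_order all_algebra all_fingroup.
From mathcomp Require Import mpoly.
Set Implicit Arguments. Unset Strict Implicit. Unset Printing Implicit Defensive.
Import GRing.Theory.
Local Open Scope ring_scope.

(** Put N = n d and, for a coefficient vector c, let g_c be the
    polynomial with coefficients c on the support of f_1.  The products
    x^u * sigma.g_c with deg u = N - d have degree N; their coefficient matrix
    M(c), whose rows are indexed by the monomials of degree N, depends
    polynomially on c.  When g_c = x_i^d, every monomial of degree N is
    divisible by some x_j^d (pigeonhole), hence is itself one of these products
    (take sigma = (i j)), so M(c) has a right inverse B.  Then h = det (M B)
    is a nonzero polynomial in c, and whenever h(c) <> 0 the products span all
    forms of degree N: the ideal contains every monomial of degree N, in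
    particular each x_i^N. *)

Lemma mnm_coord_geq n d (z : 'X_{1..n}) :
  (n * d.-1 < mdeg z)%N -> exists j : 'I_n, (d <= z j)%N.
Proof.
move=> lt_z; apply/existsP; apply: contraLR lt_z; rewrite negb_exists -leqNgt.
move=> /forallP small; rewrite mdegE -[n in (n * _)%N]card_ord -sum_nat_const.
by apply: leq_sum => j _; rewrite -ltnS (leq_trans _ (leqSpred d)) // ltnNge.
Qed.

Lemma in_ideal_sum (K : fieldType) n (gen : {mpoly K[n]} -> Prop)
    (I : finType) (a q : I -> {mpoly K[n]}) :
  (forall k, gen (q k)) -> in_ideal gen (\sum_k a k * q k).
Proof.
move=> gen_q; exists [seq (a k, q k) | k <- index_enum I].
by split; [move=> _ /mapP[k _ ->]; apply: gen_q | rewrite big_map].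
Qed.

Lemma msym_mpolyXU (R : nzRingType) n (s : 'S_n) (i : 'I_n) :
  msym s ('X_i : {mpoly R[n]}) = 'X_(s i).
Proof.
rewrite -[LHS]/(msym s 'X_[U_(i)]) msymX; congr 'X_[_].
by apply/mnmP => j; rewrite mnmE !mnm1E -(inj_eq (@perm_inj _ s)) permKV.
Qed.

Lemma dhomog_msym (R : nzRingType) n d (s : 'S_n) (p : {mpoly R[n]}) :
  p \is d.-homog -> msym s p \is d.-homog.
Proof.
move=> /dhomogP hom_p; apply/dhomogP => m.
rewrite mcoeff_msupp mcoeff_sym -mcoeff_msupp => /hom_p <-.
by rewrite [RHS]mdeg_mperm.
Qed.

Lemma map_mpoly_msym (R S : nzRingType) (f : {additive R -> S}) n (s : 'S_n)
    (p : {mpoly R[n]}) :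
  map_mpoly f (msym s p) = msym s (map_mpoly f p).
Proof.
by apply/mpolyP => m; rewrite mcoeff_map_mpoly !mcoeff_sym mcoeff_map_mpoly.
Qed.

Section DegreeForms.
Variables n N : nat.

Definition dmnm := {m : 'X_{1..n < N.+1} | mdeg m == N}.

Definition mnm_of_dmnm (m : dmnm) : 'X_{1..n} := sval m.

Lemma mdeg_dmnm m : mdeg (mnm_of_dmnm m) = N.
Proof. exact/eqP/(svalP m). Qed.

Lemma mnm_of_dmnm_inj : injective mnm_of_dmnm.
Proof. by move=> m1 m2 /val_inj /val_inj. Qed.

Lemma dmnmP z : mdeg z = N -> exists m, mnm_of_dmnm m = z.
Proof.
move=> deg_z; have lt_z : (mdeg z < N.+1)%N by rewrite deg_z.
have deg_bz : mdeg (BMultinom lt_z) == N by rewrite /= deg_z.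
by exists (exist _ (BMultinom lt_z) deg_bz).
Qed.

Definition coef_mx (R : nzRingType) (I : finType) (P : I -> {mpoly R[n]}) :
    'M[R]_(#|{: dmnm}|, #|I|) :=
  \matrix_(r, k) (P (enum_val k))@_(mnm_of_dmnm (enum_val r)).

Lemma coef_mx_row_free_span (K : fieldType) (I : finType)
    (P : I -> {mpoly K[n]}) :
    (forall k, P k \is N.-homog) -> row_free (coef_mx P) ->
  forall z, mdeg z = N -> exists w : I -> K, 'X_[z] = \sum_k w k *: P k.
Proof.
move=> hom_P /row_freeP[W coefW1] z /dmnmP[m <-].
exists (fun k => W (enum_rank k) (enum_rank m)).
rewrite (reindex _ (onW_bij _ (enum_val_bij I))) /=.
apply/mpolyP => y; rewrite mcoeffX linear_sum /=.
have [/dmnmP[m' <-]|deg_y] := eqVneq (mdeg y) N.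
  move/matrixP/(_ (enum_rank m') (enum_rank m)): coefW1.
  rewrite !mxE (inj_eq enum_rank_inj) (inj_eq mnm_of_dmnm_inj) eq_sym => <-.
  by apply: eq_bigr => k _; rewrite mxE enum_rankK enum_valK mcoeffZ mulrC.
rewrite big1 => [|k _]; last first.
  by rewrite mcoeffZ (dhomog_nemf_coeff (hom_P _)) ?mulr0.
by case: eqP => // eq_y; rewrite -eq_y mdeg_dmnm eqxx in deg_y.
Qed.

End DegreeForms.

Lemma row_free_generic (K : fieldType) k p q (M : 'M[{mpoly K[k]}]_(p, q))
    (c0 : 'I_k -> K) :
  row_free (map_mx (meval c0) M) ->
  exists h : {mpoly K[k]}, h != 0 /\
    forall c, h.@[c] != 0 -> row_free (map_mx (meval c) M).
Proof.
case/row_freeP => B MB1.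
pose h := \det (M *m map_mx (@mpolyC k K) B).
have h_eval c : h.@[c] = \det (map_mx (meval c) M *m B).
  rewrite -det_map_mx map_mxM; congr (\det (_ *m _)).
  by apply/matrixP => i j; rewrite !mxE; exact: mevalC.
exists h; split.
  apply: contra_neq (oner_neq0 K) => h0.
  by rewrite -(det1 _ p) -MB1 -h_eval h0 meval0.
move=> c; rewrite h_eval -unitfE -unitmxE => MB_unit; apply/row_freeP.
by exists (B *m invmx (map_mx (meval c) M *m B)); rewrite mulmxA mulmxV.
Qed.

Lemma coef_mx_row_free_monomials (K : fieldType) n N (I : finType)
    (P : I -> {mpoly K[n]}) :
  (forall z, mdeg z = N -> exists k, P k = 'X_[z]) -> row_free (coef_mx N P).
Proof.
move=> cover.
have ex_col (r : 'I_#|{: dmnm n N}|) :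
    exists k, P k == 'X_[mnm_of_dmnm (enum_val r)].
  by have [k Pk] := cover _ (mdeg_dmnm (enum_val r)); exists k; rewrite Pk.
pose f r := enum_rank (xchoose (ex_col r)).
apply/row_freeP; exists (colsub f 1%:M); rewrite mulmx_colsub mulmx1.
apply/matrixP => r r'; rewrite !mxE enum_rankK (eqP (xchooseP (ex_col r'))).
by rewrite mcoeffX (inj_eq (@mnm_of_dmnm_inj _ _)) (inj_eq enum_val_inj) eq_sym.
Qed.

Definition orbit_multiples (R : nzRingType) n N d (g : {mpoly R[n]})
    (su : 'S_n * dmnm n (N - d)) : {mpoly R[n]} :=
  'X_[mnm_of_dmnm su.2] * msym su.1 g.
Arguments orbit_multiples {R n} N d g su.

Lemma dhomog_orbit_multiples (R : nzRingType) n N d (g : {mpoly R[n]}) su :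
  g \is d.-homog -> (d <= N)%N -> orbit_multiples N d g su \is N.-homog.
Proof.
move=> hom_g le_dN; rewrite -[N in N.-homog](subnK le_dN).
by apply: dhomogM (dhomog_msym _ hom_g); rewrite dhomogX /= mdeg_dmnm.
Qed.

Lemma map_coef_mx_orbit_multiples (R S : nzRingType) (f : {rmorphism R -> S})
    n N d (g : {mpoly R[n]}) :
  map_mx f (coef_mx N (orbit_multiples N d g)) =
  coef_mx N (orbit_multiples N d (map_mpoly f g)).
Proof.
apply/matrixP => r k; rewrite !mxE -mcoeff_map_mpoly rmorphM /=.
by rewrite map_mpolyX map_mpoly_msym.
Qed.

Lemma orbit_multiples_cover (R : nzRingType) n d N (i0 : 'I_n) :
    (n * d.-1 < N)%N ->
  forall z, mdeg z = N ->
    exists su, orbit_multiples N d ('X_i0 ^+ d : {mpoly R[n]}) su = 'X_[z].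
Proof.
move=> lt_N z deg_z.
have [j le_d_zj] : exists j : 'I_n, (d <= z j)%N.
  by apply: mnm_coord_geq; rewrite deg_z.
have le_dz : (U_(j) *+ d <= z)%MM.
  apply/mnm_lepP => i; rewrite mulmnE mnm1E.
  by case: eqP => [<-|]; rewrite ?mul1n ?mul0n.
have [u def_u] : exists u : dmnm n (N - d),
    mnm_of_dmnm u = (z - U_(j) *+ d)%MM.
  apply: dmnmP; rewrite -deg_z -{2}(submK le_dz).
  by rewrite mdegD mdegMn mdeg1 mul1n addnK.
exists (tperm i0 j, u).
rewrite /orbit_multiples /= rmorphXn /= msym_mpolyXU tpermL.
by rewrite mpolyXn -mpolyXD def_u submK.
Qed.

Lemma orbit_forms_in_ideal (K : fieldType) n d N (g : {mpoly K[n]})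
    (gs : seq {mpoly K[n]}) :
    g \in gs -> g \is d.-homog -> (d <= N)%N ->
    row_free (coef_mx N (orbit_multiples N d g)) ->
  forall z, mdeg z = N -> in_ideal (sym_orbits_gen gs) 'X_[z].
Proof.
move=> gs_g hom_g le_dN free z deg_z.
have hom_P su : orbit_multiples N d g su \is N.-homog.
  exact: dhomog_orbit_multiples.
have [w ->] := coef_mx_row_free_span hom_P free deg_z.
under eq_bigr do rewrite /orbit_multiples -mul_mpolyC mulrA.
by apply: in_ideal_sum => -[s u]; exists s, g.
Qed.

Definition generic_poly (K : fieldType) n (A : seq 'X_{1..n}) :
    {mpoly {mpoly K[size A]}[n]} :=
  \sum_(j < size A) 'X_j *: 'X_[nth 0%MM A j].

Lemma map_generic_poly (K : fieldType) n (A : seq 'X_{1..n})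
    (c : 'I_(size A) -> K) :
  map_mpoly (meval c) (generic_poly K A) = poly_of_coeffs c.
Proof.
rewrite /generic_poly raddf_sum; apply: eq_bigr => j _.
rewrite -[LHS]/(map_mpoly (meval c) ('X_j *: 'X_[nth 0%MM A j])).
by rewrite map_mpolyZ map_mpolyX; congr (_ *: _); exact: mevalXU.
Qed.

Lemma dhomog_poly_of_coeffs (K : fieldType) n d (A : seq 'X_{1..n})
    (c : 'I_(size A) -> K) :
  {in A, forall a, mdeg a = d} -> poly_of_coeffs c \is d.-homog.
Proof.
move=> deg_A; apply: rpred_sum => j _; apply: rpredZ.
by rewrite dhomogX; apply/eqP/deg_A/mem_nth.
Qed.

Lemma generic_orbit_multiples_row_free (K : fieldType) n d (A : seq 'X_{1..n})
    (i0 : 'I_n) :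
    (0 < d)%N -> (U_(i0) *+ d)%MM \in A ->
  exists h : {mpoly K[size A]}, h != 0 /\ forall c, h.@[c] != 0 ->
    row_free (coef_mx (n * d) (orbit_multiples (n * d) d (poly_of_coeffs c))).
Proof.
move=> d_gt0 A_i0; set N := (n * d)%N.
set M := coef_mx N (orbit_multiples N d (generic_poly K A)).
have eval_coef_mx c : map_mx (meval c) M =
    coef_mx N (orbit_multiples N d (poly_of_coeffs c)).
  by rewrite map_coef_mx_orbit_multiples map_generic_poly.
pose j0 : 'I_(size A) := Ordinal (etrans (index_mem _ _) A_i0).
pose c0 : 'I_(size A) -> K := fun j => (j == j0)%:R.
have gen0 : poly_of_coeffs c0 = 'X_i0 ^+ d.
  rewrite /poly_of_coeffs (bigD1 j0) //= big1 => [|j /negbTE ne_j]; last first.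
    by rewrite /c0 ne_j scale0r.
  by rewrite /c0 eqxx scale1r addr0 nth_index // mpolyXn.
have n_gt0 : (0 < n)%N := leq_ltn_trans (leq0n _) (ltn_ord i0).
have free0 : row_free (map_mx (meval c0) M).
  rewrite eval_coef_mx gen0.
  apply/coef_mx_row_free_monomials/orbit_multiples_cover.
  by rewrite ltn_pmul2l ?ltn_predL.
have [h [h_neq0 h_free]] := row_free_generic free0.
by exists h; split => // c /h_free; rewrite eval_coef_mx.
Qed.

Theorem corollary1p3 (K : fieldType) (n : nat)
    (K_infinite : forall s : seq K, exists x : K, x \notin s)
    (d : nat) (f1 : {mpoly K[n]}) (fs : seq {mpoly K[n]}) :
  (0 < d)%N ->
  f1 \is d.-homog ->
  (exists i : 'I_n, (U_(i) *+ d)%MM \in msupp f1) ->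
  (forall f, f \in fs -> exists e : nat, f \is e.-homog) ->
  exists h : {mpoly K[size (msupp f1)]}, h != 0 /\
    forall c : 'I_(size (msupp f1)) -> K, h.@[c] != 0 ->
      let g := poly_of_coeffs c in
      affine_zero_only (sym_orbits_gen (g :: fs)) /\
      proj_empty (sym_orbits_gen (g :: fs)).
Proof.
move=> d_gt0 /dhomogP deg_f1 [i0 f1_i0] _.
have [h [h_neq0 h_free]] := generic_orbit_multiples_row_free K d_gt0 f1_i0.
exists h; split => // c /h_free free g.
have le_d_nd : (d <= n * d)%N.
  by rewrite leq_pmull // (leq_ltn_trans _ (ltn_ord i0)).
have forms := orbit_forms_in_ideal (mem_head g fs)
  (dhomog_poly_of_coeffs c deg_f1) le_d_nd free.
split; last by exists (n * d)%N.
move=> i; exists (n * d)%N; rewrite mpolyXn.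
by apply: forms; rewrite mdegMn mdeg1 mul1n.
Qed.
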